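(* There exist an environment $E$ and a total preorder $\succeq$ on $\Pi^E$ such that $\succeq\in\mathrm{Ord}_{\mathrm{MR}}(E)\cap\mathrm{Ord}_{\mathrm{LAR}}(E)$ but $\succeq\notin\mathrm{Ord}_{\mathrm{LTL}}(E)$.
   Context: An environment is a tuple $E=(\mathcal S,\mathcal A,\mathcal T,\mathcal I)$ where $\mathcal S,\mathcal A$ are finite nonempty sets, $\mathcal T:\mathcal S\times\mathcal A\to\Delta(\mathcal S)$ and $\mathcal I\in\Delta(\mathcal S)$. A policy is a map $\pi:\mathcal S\to\Delta(\mathcal A)$ (stationary, possibly stochastic); $\Pi^E$ denotes the set of all policies. A trajectory $\xi=(s_0,a_0,s_1,a_1,\dots)\in\Xi:=\mathcal S\times(\mathcal A\times\mathcal S)^\omega$ is generated under $\pi$ by $s_0\sim\mathcal I$, $a_t\sim\pi(s_t)$, $s_{t+1}\sim\mathcal T(s_t,a_t)$; $\mathbb E^\pi_\xi$ denotes expectation under this distribution. An objective-specification formalism $X$ assigns to each environment $E$ a set of objective specifications, each inducing a total preorder $\succeq$ on $\Pi^E$; $\mathrm{Ord}_X(E)$ is the set of total preorders so induced. A specification defining a scalar $J:\Pi^E\to\mathbb R$ induces $\pi_1\succeq\pi_2\iff J(\pi_1)\ge J(\pi_2)$. MR: specification $(\mathcal R,\gamma)$, $\mathcal R:\mathcal S\times\mathcal A\times\mathcal S\to\mathbb R$, $\gamma\in[0,1)$, $J(\pi)=\mathbb E^\pi_\xi[\sum_{t=0}^\infty\gamma^t\mathcal R(s_t,a_t,s_{t+1})]$.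 LAR: specification $(\mathcal R)$, $\mathcal R:\mathcal S\times\mathcal A\times\mathcal S\to\mathbb R$, $J(\pi)=\lim_{N\to\infty}\frac1N\mathbb E^\pi_\xi[\sum_{t=0}^{N-1}\mathcal R(s_t,a_t,s_{t+1})]$. LTL: specification $(\varphi)$ with $\varphi$ a linear temporal logic formula whose atomic propositions are the transitions $(s,a,s')\in\mathcal S\times\mathcal A\times\mathcal S$, built with $\neg,\lor,\land,\to$ and the temporal operators $\bigcirc$ (next), $\square$ (always), $\lozenge$ (eventually), $\mathcal U$ (until). Semantics on a trajectory $\xi$ at time $t$: an atomic proposition $(s,a,s')$ holds iff $(s_t,a_t,s_{t+1})=(s,a,s')$; $\bigcirc\psi$ holds iff $\psi$ holds at $t+1$; $\square\psi$ iff $\psi$ holds at every $t'\ge t$; $\lozenge\psi$ iff $\psi$ holds at some $t'\ge t$; $\psi\,\mathcal U\,\chi$ iff there is $t'\ge t$ with $\chi$ holding at $t'$ and $\psi$ holding at every $t''$ with $t\le t''<t'$; Boolean connectives as usual. $\varphi(\xi)=1$ if $\varphi$ holds at time $0$ and $0$ otherwise; $J(\pi)=\mathbb E^\pi_\xi[\varphi(\xi)]$. *)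

From HB Require Import structures.
From mathcomp Require Import all_boot all_order all_algebra.
From mathcomp Require Import all_classical all_reals.
From mathcomp Require Import topology normedtype sequences measure.
From mathcomp Require Import Rstruct Rstruct_topology.

Set Implicit Arguments.
Unset Strict Implicit.
Unset Printing Implicit Defensive.
Import Order.TTheory GRing.Theory Num.Theory.
Local Open Scope ring_scope.
Local Open Scope classical_set_scope.

Notation R := Rdefinitions.R.

Record env := Env {
  st : finType;
  act : finType;
  st_nonempty : (0 < #|st|)%N;
  act_nonempty : (0 < #|act|)%N;
  trans : st -> act -> st -> R;
  init : st -> R;
  trans_ge0 : forall s a s', 0 <= trans s a s';
  trans_sum1 : forall s a, \sum_(s' : st) trans s a s' = 1;
  init_ge0 : forall s, 0 <= init s;
  init_sum1 : \sum_(s : st) init s = 1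
}.

Record policy (E : env) := Policy {
  pol : st E -> act E -> R;
  pol_ge0 : forall s a, 0 <= pol s a;
  pol_sum1 : forall s, \sum_(a : act E) pol s a = 1
}.

Record traj (E : env) := Traj { traj_fun :> nat -> (st E * act E)%type }.

Definition st_pt (E : env) : st E := enum_val (Ordinal (st_nonempty E)).
Definition act_pt (E : env) : act E := enum_val (Ordinal (act_nonempty E)).

HB.instance Definition _ (E : env) := gen_eqMixin (traj E).
HB.instance Definition _ (E : env) := gen_choiceMixin (traj E).
HB.instance Definition _ (E : env) :=
  isPointed.Build (traj E) (Traj (fun _ => (st_pt E, act_pt E))).

Section Prefix.
Variables (E : env) (pi : policy E).

Fixpoint chain_prob (w : seq (st E * act E)) : R :=
  match w with
  | [::] => 1
  | p :: w' =>
      pol pi p.1 p.2 *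
      match w' with
      | [::] => 1
      | q :: _ => trans p.1 p.2 q.1 * chain_prob w'
      end
  end.

Definition prefix_prob (w : seq (st E * act E)) : R :=
  match w with
  | [::] => 1
  | p :: _ => init p.1 * chain_prob w
  end.

(* E^pi[ Rw(s_t, a_t, s_{t+1}) ], computed from the finite-dimensional
   distribution of the first t+2 state-action pairs. *)
Definition exp_reward (Rw : st E -> act E -> st E -> R) (t : nat) : R :=
  \sum_(w : (t.+2).-tuple (st E * act E))
    prefix_prob w *
    Rw (tnth w (inord t)).1 (tnth w (inord t)).2 (tnth w (inord t.+1)).1.

End Prefix.

Definition J_MR (E : env) (Rw : st E -> act E -> st E -> R) (gamma : R)
  (pi : policy E) : R :=
  limn (series (fun t => gamma ^+ t * exp_reward pi Rw t)).

Definition in_Ord_MR (E : env) (pref : policy E -> policy E -> Prop) : Prop :=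
  exists (Rw : st E -> act E -> st E -> R) (gamma : R),
    0 <= gamma < 1 /\
    forall pi1 pi2, pref pi1 pi2 <-> J_MR Rw gamma pi2 <= J_MR Rw gamma pi1.

Definition J_LAR (E : env) (Rw : st E -> act E -> st E -> R)
  (pi : policy E) : R :=
  limn (fun N : nat => N%:R^-1 * \sum_(t < N) exp_reward pi Rw t).

Definition in_Ord_LAR (E : env) (pref : policy E -> policy E -> Prop) : Prop :=
  exists (Rw : st E -> act E -> st E -> R),
    forall pi1 pi2, pref pi1 pi2 <-> J_LAR Rw pi2 <= J_LAR Rw pi1.

Inductive ltl (S A : Type) : Type :=
  | LAtom of S & A & S
  | LNot of ltl S A
  | LOr of ltl S A & ltl S A
  | LAnd of ltl S A & ltl S A
  | LImp of ltl S A & ltl S A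
  | LNext of ltl S A
  | LAlways of ltl S A
  | LEventually of ltl S A
  | LUntil of ltl S A & ltl S A.

Fixpoint ltl_holds (E : env) (phi : ltl (st E) (act E)) (xi : traj E) (t : nat)
  : Prop :=
  match phi with
  | LAtom s a s' => (xi t).1 = s /\ (xi t).2 = a /\ (xi t.+1).1 = s'
  | LNot p => ~ ltl_holds p xi t
  | LOr p q => ltl_holds p xi t \/ ltl_holds q xi t
  | LAnd p q => ltl_holds p xi t /\ ltl_holds q xi t
  | LImp p q => ltl_holds p xi t -> ltl_holds q xi t
  | LNext p => ltl_holds p xi t.+1
  | LAlways p => forall t', (t <= t')%N -> ltl_holds p xi t'
  | LEventually p => exists t', (t <= t')%N /\ ltl_holds p xi t'
  | LUntil p q => exists t', (t <= t')%N /\ ltl_holds q xi t' /\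
                    forall t'', (t <= t'')%N -> (t'' < t')%N -> ltl_holds p xi t''
  end.

Definition cyl (E : env) (w : seq (st E * act E)) : set (traj E) :=
  [set xi | mkseq xi (size w) = w].

Notation traj_space E := (g_sigma_algebraType (range (@cyl E))).

Definition is_traj_measure (E : env) (pi : policy E)
  (mu : {measure set (traj_space E) -> \bar R}) : Prop :=
  forall w, mu (cyl w) = (prefix_prob pi w)%:E.

Definition ltl_set (E : env) (phi : ltl (st E) (act E)) : set (traj_space E) :=
  [set xi | ltl_holds phi xi 0].

(* J(pi) = E^pi[phi(xi)] = mu_pi({xi | phi holds at 0}). *)
Definition in_Ord_LTL (E : env) (pref : policy E -> policy E -> Prop) : Prop :=
  exists phi : ltl (st E) (act E),
    forall (pi1 pi2 : policy E) (mu1 mu2 : {measure set (traj_space E) -> \bar R}),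
      is_traj_measure pi1 mu1 -> is_traj_measure pi2 mu2 ->
      (pref pi1 pi2 <-> (mu2 (ltl_set phi) <= mu1 (ltl_set phi))%E).

(* Take the one-state environment whose actions are 0, 1, 2 and whose reward is
   the action played.  Since actions are drawn i.i.d. from pi(tt), the expected
   reward at every step is v(pi) = sum_a pi(a) a, so both the discounted and the
   limit-average objectives order policies by v.  The three deterministic
   policies have v = 0 < 1 < 2, but each produces a single trajectory almost
   surely, so an LTL formula holds for each of them with probability 0 or 1 and
   cannot rank all three strictly. *)
From mathcomp Require Import all_boot all_order all_algebra.
From mathcomp Require Import all_classical all_reals.
From mathcomp Require Import topology normedtype sequences measure.
From mathcomp Require Import Rstruct Rstruct_topology.

Set Implicit Arguments.
Unset Strict Implicit.
Unset Printing Implicit Defensive.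
Import Order.TTheory GRing.Theory Num.Theory.
Local Open Scope ring_scope.

Section TupleSums.
Variables (K : comPzSemiRingType) (T : finType).

Lemma big_tuple_cons n (F : n.+1.-tuple T -> K) :
  \sum_(w : n.+1.-tuple T) F w =
  \sum_(x : T) \sum_(w : n.-tuple T) F [tuple of x :: w].
Proof.
rewrite pair_big /=.
rewrite (reindex (fun p : T * n.-tuple T => [tuple of p.1 :: p.2])) //=.
exists (fun w => (thead w, [tuple of behead w])) => [[x w] _ | w _] /=.
- by rewrite theadE; congr pair; apply: val_inj.
- by rewrite -tuple_eta.
Qed.

Lemma sum_tuple_prod (f : T -> K) n :
  \sum_(w : n.-tuple T) \prod_(x <- w) f x = (\sum_x f x) ^+ n.
Proof.
elim: n => [|n IH].
  rewrite (eq_bigr (fun=> 1)) => [|w _]; last by rewrite tuple0 big_nil.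
  by rewrite sumr_const card_tuple expn0 expr0.
rewrite big_tuple_cons exprS -IH mulr_suml; apply: eq_bigr => x _.
by rewrite mulr_sumr; apply: eq_bigr => w _; rewrite big_cons.
Qed.

Lemma sum_tuple_prod_tnth (f g : T -> K) n (i : 'I_n) :
  \sum_(w : n.-tuple T) (\prod_(x <- w) f x) * g (tnth w i) =
  (\sum_x f x) ^+ n.-1 * \sum_x f x * g x.
Proof.
elim: n i => [[] //|n IH] i; rewrite big_tuple_cons.
case: (unliftP ord0 i) => [j ->|->] /=.
- case: n j {i} IH => [[] //|n] j IH.
  under eq_bigr do under eq_bigr do rewrite tnthS big_cons -mulrA.
  under eq_bigr do rewrite -mulr_sumr IH.
  by rewrite -mulr_suml exprS mulrA.
- under eq_bigr do under eq_bigr do rewrite tnth0 big_cons mulrAC.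
  under eq_bigr do rewrite -mulr_sumr sum_tuple_prod.
  by rewrite -mulr_suml mulrC.
Qed.

End TupleSums.

Lemma sumr_unit (V : nmodType) (F : unit -> V) : \sum_(s : unit) F s = F tt.
Proof. by rewrite (bigD1 tt) //= big1 ?addr0 // => -[]. Qed.

Section ConstantReward.
Variables (E : env) (pi : policy E) (Rw : st E -> act E -> st E -> R) (c : R).
Hypothesis exp_reward_cst : forall t, exp_reward pi Rw t = c.

Lemma J_MR_const_reward (gamma : R) :
  0 <= gamma < 1 -> J_MR Rw gamma pi = c / (1 - gamma).
Proof.
move=> /andP[gamma_ge0 gamma_lt1]; rewrite /J_MR.
have -> : (fun t => gamma ^+ t * exp_reward pi Rw t) = geometric c gamma.
  by apply/funext => t; rewrite exp_reward_cst mulrC.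
apply: cvg_lim; first exact: Rhausdorff.
by apply: cvg_geometric_series; rewrite ger0_norm.
Qed.

Lemma J_LAR_const_reward : J_LAR Rw pi = c.
Proof.
apply: lim_near_cst; first exact: Rhausdorff.
exists 1%N => // N /= N_gt0.
rewrite (eq_bigr (fun=> c)) // sumr_const card_ord -[c *+ N]mulr_natl.
by rewrite mulrA mulVf ?mul1r // pnatr_eq0 -lt0n.
Qed.

End ConstantReward.

Section Deterministic.
Variables (E : env) (f : st E -> act E).

Lemma det_pol_sum1 s : \sum_(a : act E) (a == f s)%:R = 1 :> R.
Proof. by rewrite (bigD1 (f s)) //= eqxx big1 ?addr0 // => a /negbTE ->. Qed.

Definition det_policy : policy E :=
  Policy (fun s a => ler0n _ (a == f s)) det_pol_sum1.

End Deterministic.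

Lemma dirac_is_traj_measure (E : env) (pi : policy E) (xi : traj E) :
  (forall w, prefix_prob pi w = (mkseq xi (size w) == w)%:R) ->
  is_traj_measure pi \d_(xi : traj_space E).
Proof.
move=> prefix_xi w; rewrite /= diracE prefix_xi; congr ((nat_of_bool _)%:R%:E).
by apply/idP/eqP => [/set_mem | /mem_set].
Qed.

Lemma not_in_Ord_LTL_strict_chain (E : env)
    (pref : policy E -> policy E -> Prop)
    (pi0 pi1 pi2 : policy E) (xi0 xi1 xi2 : traj E) :
  is_traj_measure pi0 \d_(xi0 : traj_space E) ->
  is_traj_measure pi1 \d_(xi1 : traj_space E) ->
  is_traj_measure pi2 \d_(xi2 : traj_space E) ->
  ~ pref pi0 pi1 -> ~ pref pi1 pi2 -> ~ in_Ord_LTL pref.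
Proof.
move=> mu0 mu1 mu2 npref01 npref12 [phi LTL_pref].
have ltl_lt pi pi' (xi xi' : traj E) :
    is_traj_measure pi \d_(xi : traj_space E) ->
    is_traj_measure pi' \d_(xi' : traj_space E) -> ~ pref pi pi' ->
    ((xi \in ltl_set phi) < (xi' \in ltl_set phi))%N.
  move=> mu mu' npref; have := LTL_pref _ _ _ _ mu mu'.
  rewrite /= !diracE lee_fin ler_nat ltnNge => pref_iff.
  by apply/negP => /pref_iff.
move: (ltl_lt _ _ _ _ mu0 mu1 npref01) (ltl_lt _ _ _ _ mu1 mu2 npref12).
by case: (xi1 \in _); case: (xi2 \in _).
Qed.

Lemma mkseq_cst (T : Type) (x : T) n : mkseq (fun=> x) n = nseq n x.
Proof. by rewrite /mkseq; elim: n 0%N => //= n IH m; rewrite IH. Qed.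

Lemma card_unit_gt0 : (0 < #|{: unit}|)%N. Proof. by rewrite card_unit. Qed.

Section Bandit.
Variables (A : finType) (A_gt0 : (0 < #|A|)%N).

Definition bandit : env :=
  Env card_unit_gt0 A_gt0 (fun _ _ _ => ler01)
    (fun _ _ => sumr_unit (fun=> 1)) (fun _ => ler01) (sumr_unit (fun=> 1)).

Lemma prefix_prob_bandit (pi : policy bandit) w :
  prefix_prob pi w = \prod_(p <- w) pol pi p.1 p.2.
Proof.
have chain_prob_prod w' : chain_prob pi w' = \prod_(p <- w') pol pi p.1 p.2.
  elim: w' => [|p w' IH]; first by rewrite big_nil.
  case: w' IH => [|q w'] IH; first by rewrite /= big_seq1 mulr1.
  by rewrite big_cons -IH /= mul1r.
by case: w => [|p w]; rewrite ?big_nil //= mul1r -chain_prob_prod.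
Qed.

Definition bandit_value (pi : policy bandit) (r : A -> R) : R :=
  \sum_a pol pi tt a * r a.

Lemma exp_reward_bandit (pi : policy bandit) (r : A -> R) t :
  exp_reward pi (fun _ a _ => r a) t = bandit_value pi r.
Proof.
have sum_pairs (F : unit * A -> R) : \sum_p F p = \sum_a F (tt, a).
  rewrite (eq_bigr (fun p => F (p.1, p.2))) => [|[] //].
  by rewrite -(pair_big xpredT xpredT (fun s a => F (s, a))) sumr_unit.
rewrite /exp_reward; under eq_bigr do rewrite prefix_prob_bandit.
rewrite (sum_tuple_prod_tnth (fun p => pol pi p.1 p.2) (fun p => r p.2)).
by rewrite !sum_pairs /= (pol_sum1 pi tt) expr1n mul1r.
Qed.

Definition const_action (a : A) : policy bandit :=
  @det_policy bandit (fun _ => a).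

Lemma bandit_value_const_action a r : bandit_value (const_action a) r = r a.
Proof.
rewrite /bandit_value (bigD1 a) //= eqxx mul1r big1 ?addr0 //.
by move=> b /negbTE ->; rewrite mul0r.
Qed.

Lemma const_action_is_traj_measure a :
  is_traj_measure (const_action a)
    \d_(@Traj bandit (fun _ => (tt, a)) : traj_space bandit).
Proof.
apply: dirac_is_traj_measure => w; rewrite prefix_prob_bandit /= mkseq_cst.
elim: w => [|[[] b] w IH]; first by rewrite big_nil.
by rewrite big_cons IH /= eqseq_cons xpair_eqE -mulnb natrM (eq_sym a).
Qed.

End Bandit.

Lemma card_ord3_gt0 : (0 < #|{: 'I_3}|)%N. Proof. by rewrite card_ord. Qed.

Theorem mainTheorem10 :
  exists (E : env) (pref : policy E -> policy E -> Prop),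
    in_Ord_MR pref /\ in_Ord_LAR pref /\ ~ in_Ord_LTL pref.
Proof.
pose r (a : 'I_3) : R := (a : nat)%:R.
exists (bandit card_ord3_gt0).
exists (fun pi1 pi2 => bandit_value pi2 r <= bandit_value pi1 r).
split; [|split].
- have gamma0 : 0 <= (0 : R) < 1 by rewrite lexx ltr01.
  exists (fun _ a _ => r a), 0; split=> // pi1 pi2.
  by rewrite !(J_MR_const_reward (exp_reward_bandit _ _) gamma0) subr0 !divr1.
- exists (fun _ a _ => r a) => pi1 pi2.
  by rewrite !(J_LAR_const_reward (exp_reward_bandit _ _)).
- pose a k : 'I_3 := inord k.
  apply: (not_in_Ord_LTL_strict_chain (const_action_is_traj_measure (a 0))
    (const_action_is_traj_measure (a 1)) (const_action_is_traj_measure (a 2)));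
    by rewrite !bandit_value_const_action /r /a !inordK // ler_nat.
Qed.
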